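(* Let $n$ be a positive integer and let $\theta=\lambda/\mu$ be a skew Young diagram such that every column of $\theta$ contains at most $n$ boxes. Then the number $|\mathrm{SVT}(\theta,n)|$ of set-valued tableaux of shape $\theta$ with entries in $[n]=\{1,\dots,n\}$ is odd.
   Context: A partition $\lambda=(\lambda_1\ge\lambda_2\ge\cdots\ge 0)$ is identified with its Young diagram $\{(i,j)\in\mathbb{Z}_{>0}^2 : j\le\lambda_i\}$ (row index $i$ increasing downward, column index $j$ increasing to the right). For partitions $\mu\subseteq\lambda$, the skew Young diagram $\theta=\lambda/\mu$ is the set-theoretic difference $\lambda\setminus\mu$, and $|\theta|$ is its number of boxes. A set-valued tableau of shape $\theta$ with entries in $[n]$ is an assignment of a non-empty subset $T_{i,j}\subseteq[n]$ to each box $(i,j)\in\theta$ such that $\max T_{i,j}\le\min T_{i,j+1}$ whenever $(i,j),(i,j+1)\in\theta$, and $\max T_{i,j}<\min T_{i+1,j}$ whenever $(i,j),(i+1,j)\in\theta$. $\mathrm{SVT}(\theta,n)$ denotes the set of all such tableaux. *)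

From mathcomp Require Import all_boot.
Set Implicit Arguments. Unset Strict Implicit. Unset Printing Implicit Defensive.

(* A partition is a weakly decreasing sequence of naturals
   lam = [:: lam_1; lam_2; ...] (trailing zeros allowed; lam_i = nth 0 lam (i-1)). *)
Definition is_partition (lam : seq nat) : bool := sorted geq lam.

Definition part_sub (mu lam : seq nat) : Prop :=
  forall i, nth 0 mu i <= nth 0 lam i.

(* Box in 0-based coordinates (i, j) stands for the box (i+1, j+1).
   (i+1, j+1) \in lam / mu  iff  mu_{i+1} < j+1 <= lam_{i+1}. *)
Definition in_skew (lam mu : seq nat) (i j : nat) : bool :=
  (nth 0 mu i <= j) && (j < nth 0 lam i).

Definition col_count (lam mu : seq nat) (j : nat) : nat :=
  count (fun i => in_skew lam mu i j) (iota 0 (size lam)).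

(* Entries: value k : 'I_n stands for the integer k+1 of [n]. *)
Definition setmax n (A : {set 'I_n}) : nat := \max_(a in A) (val a).
Definition setmin n (A : {set 'I_n}) : nat := \big[minn/n]_(a in A) (val a).

(* Rows indexed by 'I_(size lam), columns by 'I_(head 0 lam) (lam_1 columns);
   every box of lam/mu lies in this rectangle. Off the diagram the filling is
   forced to be empty so that fillings correspond bijectively to SVT(theta,n). *)
Definition box_t (lam : seq nat) := ('I_(size lam) * 'I_(head 0 lam))%type.

Definition is_svt (lam mu : seq nat) (n : nat)
    (T : {ffun box_t lam -> {set 'I_n}}) : bool :=
  [forall x : box_t lam,
     if in_skew lam mu x.1 x.2 then T x != set0 else T x == set0] &&
  [forall x : box_t lam, forall y : box_t lam,
     ((in_skew lam mu x.1 x.2 && in_skew lam mu y.1 y.2) ==>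
     ((((val y.1 == val x.1) && (val y.2 == (val x.2).+1)) ==>
         (setmax (T x) <= setmin (T y))) &&
      (((val y.1 == (val x.1).+1) && (val y.2 == val x.2)) ==>
         (setmax (T x) < setmin (T y)))))].

Definition SVT (lam mu : seq nat) (n : nat) :=
  [set T : {ffun box_t lam -> {set 'I_n}} | @is_svt lam mu n T].

(* Bound the entries of each box x by n minus the number of boxes of the skew
   shape below x in its column: every set-valued tableau respects these bounds,
   which weakly decrease along rows and strictly decrease down columns.  Count,
   more generally, fillings of a finite set of boxes with nonempty sets of
   bounded values, weakly increasing along one relation and strictly along
   another, by removing a box b with no successor.  Given a filling of the other
   boxes, the admissible contents of b are exactly the nonempty subsets of a set
   V of values, and V contains the bound of b minus one.  Hence every filling
   extends in 2^|V| - 1 ways, an odd number, and the parity of the count is that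
   of the empty filling, namely 1. *)

From mathcomp Require Import all_boot zify.
Set Implicit Arguments. Unset Strict Implicit. Unset Printing Implicit Defensive.

Lemma setmax_leP n (X : {set 'I_n}) m :
  reflect (forall a, a \in X -> val a <= m) (setmax X <= m).
Proof. exact: bigmax_leqP. Qed.

Lemma le_setmax n (X : {set 'I_n}) a : a \in X -> val a <= setmax X.
Proof. by move=> aX; apply: (@leq_bigmax_cond _ (mem X) val). Qed.

Lemma setmin_le n (X : {set 'I_n}) a : a \in X -> setmin X <= val a.
Proof.
move=> aX; rewrite /setmin -big_filter.
have : a \in [seq i <- index_enum 'I_n | i \in X] by rewrite mem_filter aX mem_index_enum.
elim: [seq i <- _ | _] => //= i s IHs; rewrite big_cons inE => /orP[/eqP <-|/IHs].
  exact: geq_minl.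
exact: leq_trans (geq_minr _ _).
Qed.

Lemma setmin_geP n (X : {set 'I_n}) m : X != set0 ->
  reflect (forall a, a \in X -> m <= val a) (m <= setmin X).
Proof.
move=> X_neq0; apply: (iffP idP) => [le_m a aX | le_m].
  exact: leq_trans le_m (setmin_le aX).
have /set0Pn[a0 a0X] := X_neq0.
apply: (big_ind (fun v => m <= v)) => [|x y|a /le_m //].
  exact: leq_trans (le_m _ a0X) (ltnW (ltn_ord a0)).
by rewrite leq_min => -> ->.
Qed.

Lemma odd_card_fibers (T1 T2 : finType) (f : T1 -> T2) (A : {set T1}) (A' : {set T2}) :
  {in A, forall x, f x \in A'} ->
  {in A', forall y, odd #|[set x in A | f x == y]|} ->
  odd #|A| = odd #|A'|.
Proof.
move=> fA odd_fiber; rewrite -!sum1_card (partition_big f (mem A')) //.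
apply: (big_ind2 (fun a b => odd a = odd b)) => [//|a1 a2 b1 b2|y yA'].
  by rewrite !oddD => -> ->.
by rewrite sum1dep_card odd_fiber.
Qed.

Lemma odd_card_nonempty_subsets (T : finType) (V : {set T}) :
  V != set0 -> odd #|powerset V :\ set0|.
Proof.
rewrite -card_gt0 => V_gt0.
have := cardsD1 set0 (powerset V); rewrite !inE sub0set card_powerset add1n.
by case: #|V| V_gt0 => // m _ /(congr1 odd); rewrite oddX /=; case: (odd _).
Qed.

Definition ffun_set (B : finType) (V : Type) (T : {ffun B -> V}) (b : B) (X : V)
    : {ffun B -> V} :=
  [ffun x => if x == b then X else T x].

Lemma ffun_set_id (B : finType) (V : Type) (T : {ffun B -> V}) b : ffun_set T b (T b) = T.
Proof. by apply/ffunP => x; rewrite ffunE; case: eqP => // ->. Qed.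

Lemma ffun_set_set (B : finType) (V : Type) (T : {ffun B -> V}) b X Y :
  ffun_set (ffun_set T b X) b Y = ffun_set T b Y.
Proof. by apply/ffunP => x; rewrite !ffunE; case: eqP. Qed.

Section BoundedFillings.
Variables (B : finType) (n : nat) (R D : rel B).
Implicit Types (S : {set B}) (r : B -> nat) (T : {ffun B -> {set 'I_n}}).

Definition bounded_filling S r T : bool :=
  [forall x, if x \in S then (T x != set0) && [forall a in T x, val a < r x]
             else T x == set0] &&
  [forall x, forall y, (x \in S) && (y \in S) ==>
     (R x y ==> (setmax (T x) <= setmin (T y))) &&
     (D x y ==> (setmax (T x) < setmin (T y)))].

Lemma bounded_fillingP S r T : reflect
  ((forall x, if x \in S then T x != set0 /\ (forall a, a \in T x -> val a < r x)
              else T x = set0) /\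
   (forall x y, x \in S -> y \in S ->
      (R x y -> setmax (T x) <= setmin (T y)) /\ (D x y -> setmax (T x) < setmin (T y))))
  (bounded_filling S r T).
Proof.
apply: (iffP andP) => [[/forallP supp /forallP mono] | [supp mono]]; split.
- by move=> x; have := supp x; case: (x \in S) => [/andP[-> /forall_inP]|/eqP].
- move=> x y xS yS; have /forallP/(_ y) := mono x; rewrite xS yS /=.
  by case/andP => /implyP ? /implyP.
- apply/forallP => x; have := supp x; case: (x \in S) => [[-> /forall_inP]|->] //.
- apply/forallP => x; apply/forallP => y; apply/implyP => /andP[xS yS].
  by have [? ?] := mono x y xS yS; apply/andP; split; apply/implyP.
Qed.

Section Extension.
Variables (S : {set B}) (r : B -> nat) (b : B).
Hypotheses (bS : b \in S) (b_maximal : forall y, y \in S -> ~~ R b y && ~~ D b y).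

Definition extension_values T : {set 'I_n} :=
  [set a : 'I_n | (val a < r b) && [forall y in S :\ b,
     (R y b ==> (setmax (T y) <= val a)) && (D y b ==> (setmax (T y) < val a))]].

Lemma bounded_filling_erase T :
  bounded_filling S r T -> bounded_filling (S :\ b) r (ffun_set T b set0).
Proof.
case/bounded_fillingP => supp mono; apply/bounded_fillingP; split.
  by move=> x; rewrite ffunE !inE; case: eqP => [_ | _]; [case: (x \in S) | apply: supp].
move=> x y; rewrite !inE !ffunE => /andP[/negbTE-> xS] /andP[/negbTE-> yS].
exact: mono.
Qed.

Lemma bounded_filling_set T X : bounded_filling (S :\ b) r T ->
  bounded_filling S r (ffun_set T b X) = (X \in powerset (extension_values T) :\ set0).
Proof.
case/bounded_fillingP => supp mono; apply/bounded_fillingP/idP.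
  case=> suppX monoX; have := suppX b; rewrite bS ffunE eqxx => -[X_neq0 X_lt].
  rewrite !inE X_neq0; apply/subsetP => a aX; rewrite inE X_lt //=.
  apply/forall_inP => y yS'; have /setD1P[yb yS] := yS'.
  have [le_yb lt_yb] := monoX y b yS bS; rewrite !ffunE (negbTE yb) eqxx in le_yb lt_yb.
  have Xmin_le := setmin_le aX.
  apply/andP; split; apply/implyP => yb_rel.
    exact: leq_trans (le_yb yb_rel) Xmin_le.
  exact: leq_trans (lt_yb yb_rel) Xmin_le.
rewrite !inE => /andP[X_neq0 /subsetP X_sub]; split=> [x | x y xS yS].
  rewrite ffunE; case: (eqVneq x b) => [->|xb]; last by have := supp x; rewrite !inE xb.
  by rewrite bS; split=> // a /X_sub; rewrite inE => /andP[].
rewrite !ffunE; case: (eqVneq x b) => [-> | xb].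
  by have /andP[/negbTE-> /negbTE->] := b_maximal yS.
case: (eqVneq y b) => [-> | yb]; last by apply: mono; rewrite !inE ?xb ?yb.
have xS' : x \in S :\ b by rewrite !inE xb.
have X_ge a : a \in X -> (R x b -> setmax (T x) <= a) /\ (D x b -> setmax (T x) < a).
  by move=> /X_sub; rewrite inE => /andP[_ /forall_inP/(_ x xS')/andP[/implyP ? /implyP]].
by split=> xb_rel; apply/(setmin_geP _ X_neq0) => a /X_ge[le_a lt_a]; [exact: le_a | exact: lt_a].
Qed.

Lemma card_bounded_filling_fiber T : bounded_filling (S :\ b) r T ->
  #|[set T' in [set T' | bounded_filling S r T'] | ffun_set T' b set0 == T]| =
  #|powerset (extension_values T) :\ set0|.
Proof.
move=> okT; have Tb : T b = set0.
  by case/bounded_fillingP: okT => supp _; have := supp b; rewrite !inE eqxx.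
have -> : [set T' in [set T' | bounded_filling S r T'] | ffun_set T' b set0 == T] =
          ffun_set T b @: (powerset (extension_values T) :\ set0).
  apply/setP => T'; rewrite !inE; apply/andP/imsetP => [[okT' /eqP <-] | [X X_ok ->]].
    exists (T' b); last by rewrite ffun_set_set ffun_set_id.
    by rewrite -bounded_filling_set ?bounded_filling_erase // ffun_set_set ffun_set_id.
  split; first by rewrite bounded_filling_set.
  by rewrite ffun_set_set -{2}(ffun_set_id T b) Tb.
by apply: card_in_imset => X1 X2 _ _ /ffunP/(_ b); rewrite !ffunE eqxx.
Qed.

Hypotheses (r_range : {in S, forall x, 0 < r x <= n})
  (r_R : {in S &, forall x y, R x y -> r x <= r y})
  (r_D : {in S &, forall x y, D x y -> r x < r y}).

Lemma extension_values_neq0 T : bounded_filling (S :\ b) r T -> extension_values T != set0.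
Proof.
case/bounded_fillingP => supp _; have /andP[rb_gt0 rb_le] := r_range bS.
have rb_lt : (r b).-1 < n by rewrite prednK.
apply/set0Pn; exists (Ordinal rb_lt); rewrite inE /= prednK // leqnn /=.
apply/forall_inP => y yS'; have /setD1P[_ yS] := yS'.
have := supp y; rewrite yS' => -[_ Ty_lt].
have /andP[ry_gt0 _] := r_range yS.
apply/andP; split; apply/implyP.
  by move=> /(r_R yS bS) ry_rb; apply/setmax_leP => a /Ty_lt; lia.
move=> /(r_D yS bS) ry_rb.
suff : setmax (T y) <= (r y).-1 by lia.
by apply/setmax_leP => a /Ty_lt; lia.
Qed.

End Extension.

Theorem odd_card_bounded_fillings (w : B -> nat)
    (R_w : forall x y, R x y -> w x < w y) (D_w : forall x y, D x y -> w x < w y)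
    S r :
  {in S, forall x, 0 < r x <= n} ->
  {in S &, forall x y, R x y -> r x <= r y} ->
  {in S &, forall x y, D x y -> r x < r y} ->
  odd #|[set T | bounded_filling S r T]|.
Proof.
have [k] := ubnP #|S|; elim: k S => // k IHk S; rewrite ltnS => S_le r_range r_R r_D.
have [-> | [b0 b0S]] := set_0Vmem S.
  suff -> : [set T | bounded_filling set0 r T] = [set [ffun=> set0]] by rewrite cards1.
  apply/setP => T; rewrite !inE; apply/bounded_fillingP/eqP => [[supp _] | ->].
    by apply/ffunP => x; have := supp x; rewrite inE ffunE.
  by split=> [x|x y]; rewrite ?inE ?ffunE.
have [b bS b_wmax] := @arg_maxnP _ b0 (fun x => x \in S) w b0S.
have b_maximal y : y \in S -> ~~ R b y && ~~ D b y.
  by move/b_wmax => le_yb; apply/andP; split; apply/negP; [move/R_w | move/D_w]; lia.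
have S'_sub : {subset S :\ b <= S} by move=> x /setD1P[].
rewrite (@odd_card_fibers _ _ (fun T => ffun_set T b set0) _ [set T | bounded_filling (S :\ b) r T]).
- apply: IHk; first by rewrite (cardsD1 b S) bS in S_le.
  + by move=> x /S'_sub; apply: r_range.
  + by move=> x y /S'_sub xS /S'_sub yS; apply: r_R.
  + by move=> x y /S'_sub xS /S'_sub yS; apply: r_D.
- by move=> T; rewrite !inE; apply: bounded_filling_erase.
move=> T; rewrite inE => okT; rewrite card_bounded_filling_fiber //.
exact/odd_card_nonempty_subsets/extension_values_neq0.
Qed.

End BoundedFillings.

Lemma nth_partition_le p i t : is_partition p -> i <= t -> nth 0 p t <= nth 0 p i.
Proof.
move=> p_sorted le_it; have [t_lt | t_ge] := ltnP t (size p); last by rewrite nth_default.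
apply: (sorted_leq_nth (fun _ _ _ h1 h2 => leq_trans h2 h1) leqnn) => //.
by rewrite inE (leq_ltn_trans le_it).
Qed.

Section SkewShape.
Variables (lam mu : seq nat).

Definition boxes_below (i j : nat) : nat :=
  count (fun t => in_skew lam mu t j) (iota i.+1 (size lam - i.+1)).

Lemma in_skew_size i j : in_skew lam mu i j -> i < size lam.
Proof.
by case/andP => _; apply: contraTT; rewrite -leqNgt => /(nth_default 0) ->.
Qed.

Lemma boxes_below_down i j :
  in_skew lam mu i.+1 j -> boxes_below i j = (boxes_below i.+1 j).+1.
Proof.
by move=> i1j; rewrite /boxes_below -subnSK ?(in_skew_size i1j) //= [in_skew _ _ _ _]i1j.
Qed.

Lemma boxes_below_lt_col_count i j :
  in_skew lam mu i j -> boxes_below i j < col_count lam mu j.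
Proof.
move=> ij; rewrite /col_count -(subnKC (ltnW (in_skew_size ij))) iotaD count_cat.
by rewrite -subnSK ?(in_skew_size ij) //= !add0n [in_skew _ _ _ _]ij add1n ltn_addl.
Qed.

Hypothesis mu_partition : is_partition mu.

Lemma in_skew_left i t j :
  i <= t -> in_skew lam mu i j -> in_skew lam mu t j.+1 -> in_skew lam mu t j.
Proof.
move=> le_it /andP[mu_i _] /andP[_ lam_t]; rewrite /in_skew (ltnW lam_t) andbT.
exact: leq_trans (nth_partition_le mu_partition le_it) mu_i.
Qed.

Lemma boxes_below_right i j :
  in_skew lam mu i j -> boxes_below i j.+1 <= boxes_below i j.
Proof.
move=> ij; rewrite /boxes_below.
rewrite (@eq_in_count _ _ (fun t => (i < t) && in_skew lam mu t j.+1)); last first.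
  by move=> t; rewrite mem_iota => /andP[-> _].
by apply: sub_count => t /andP[/ltnW le_it tj1]; apply: in_skew_left le_it ij tj1.
Qed.

Hypothesis lam_partition : is_partition lam.

Lemma in_skew_between i s t j : i <= s <= t ->
  in_skew lam mu i j -> in_skew lam mu t j -> in_skew lam mu s j.
Proof.
case/andP=> le_is le_st /andP[mu_i _] /andP[_ lam_t]; apply/andP; split.
  exact: leq_trans (nth_partition_le mu_partition le_is) mu_i.
exact: leq_trans lam_t (nth_partition_le lam_partition le_st).
Qed.

Lemma boxes_below_gt0 i j :
  in_skew lam mu i j -> 0 < boxes_below i j -> in_skew lam mu i.+1 j.
Proof.
move=> ij; rewrite -has_count => /hasP[t]; rewrite mem_iota => /andP[le_i1t _] tj.
by apply: in_skew_between ij tj; rewrite leqnSn le_i1t.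
Qed.

End SkewShape.

Section Tableaux.
Variables (lam mu : seq nat) (n : nat).
Hypotheses (lam_partition : is_partition lam) (mu_partition : is_partition mu).

Definition row_succ : rel (box_t lam) :=
  fun x y => (val y.1 == val x.1) && (val y.2 == (val x.2).+1).
Definition col_succ : rel (box_t lam) :=
  fun x y => (val y.1 == (val x.1).+1) && (val y.2 == val x.2).
Definition skew_boxes : {set box_t lam} := [set x : box_t lam | in_skew lam mu x.1 x.2].
Definition entry_bound (x : box_t lam) : nat := n - boxes_below lam mu x.1 x.2.

Lemma svt_entry_bound (T : {ffun box_t lam -> {set 'I_n}}) (x : box_t lam) a :
  is_svt mu T ->
  in_skew lam mu x.1 x.2 -> a \in T x -> val a + boxes_below lam mu x.1 x.2 < n.
Proof.
case/andP=> /forallP supp /forallP mono.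
move dx : (boxes_below lam mu x.1 x.2) => d.
elim: d x a dx => [|d IHd] x a dx xS aT; first by rewrite addn0 ltn_ord.
have x1S : in_skew lam mu x.1.+1 x.2 by apply: boxes_below_gt0; rewrite ?dx.
pose y : box_t lam := (Ordinal (in_skew_size x1S), x.2).
have /set0Pn[c cT] : T y != set0 by have := supp y; rewrite /= x1S.
have dy : boxes_below lam mu y.1 y.2 = d.
  by apply: succn_inj; rewrite -dx (boxes_below_down x1S).
have c_bound := IHd y c dy x1S cT.
have := forallP (mono x) y; rewrite /= xS x1S !eqxx /= => /andP[_ lt_xy].
have := le_setmax aT; have := setmin_le cT; move: c_bound; rewrite /=; lia.
Qed.

Lemma SVT_bounded_fillings :
  SVT lam mu n = [set T | bounded_filling row_succ col_succ skew_boxes entry_bound T].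
Proof.
apply/setP => T; rewrite !inE; apply/idP/bounded_fillingP => [svtT | [supp mono]].
  have /andP[/forallP supp /forallP mono] := svtT; split=> [x | x y].
    rewrite inE; have := supp x; case: ifP => [xS -> | _ /eqP] //; split=> // a aT.
    by rewrite /entry_bound ltn_subRL addnC (svt_entry_bound svtT).
  rewrite !inE => xS yS; have := forallP (mono x) y; rewrite xS yS.
  by case/andP => /implyP ? /implyP.
apply/andP; split; apply/forallP => x.
  by have := supp x; rewrite inE; case: ifP => [_ [-> _] | _ ->].
apply/forallP => y; apply/implyP => /andP[xS yS].
have := mono x y; rewrite !inE => /(_ xS yS) [le_xy lt_xy].
by apply/andP; split; apply/implyP.
Qed.

Hypothesis col_le_n : forall j, col_count lam mu j <= n.

Lemma entry_bound_range : {in skew_boxes, forall x, 0 < entry_bound x <= n}.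
Proof.
move=> x; rewrite inE => xS; rewrite /entry_bound subn_gt0 leq_subr andbT.
exact: leq_trans (boxes_below_lt_col_count xS) (col_le_n _).
Qed.

Lemma entry_bound_row_succ :
  {in skew_boxes &, forall x y, row_succ x y -> entry_bound x <= entry_bound y}.
Proof.
move=> x y; rewrite !inE /entry_bound => xS _ /andP[/eqP -> /eqP ->].
by rewrite leq_sub2l // boxes_below_right.
Qed.

Lemma entry_bound_col_succ :
  {in skew_boxes &, forall x y, col_succ x y -> entry_bound x < entry_bound y}.
Proof.
move=> x y; rewrite !inE => _ + /andP[/eqP y1 /eqP y2]; rewrite y1 y2 => x1S.
rewrite /entry_bound y1 y2 (boxes_below_down x1S).
have := leq_trans (boxes_below_lt_col_count x1S) (col_le_n _); lia.
Qed.

End Tableaux.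

Theorem theorem3p1 (n : nat) (lam mu : seq nat) :
  0 < n ->
  is_partition lam -> is_partition mu -> part_sub mu lam ->
  (forall j, col_count lam mu j <= n) ->
  odd #|SVT lam mu n|.
Proof.
move=> _ lam_partition mu_partition _ col_le_n.
rewrite SVT_bounded_fillings //.
apply: (odd_card_bounded_fillings (w := fun x : box_t lam => val x.1 + val x.2)).
- by move=> x y /andP[/eqP -> /eqP ->]; lia.
- by move=> x y /andP[/eqP -> /eqP ->]; lia.
- exact: entry_bound_range.
- exact: entry_bound_row_succ.
- exact: entry_bound_col_succ.
Qed.
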